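(* Let $(c,d),(e,f)\in\mathcal{B}$ with $d$ and $f$ odd and $d\neq f$. Then $U=\{(0,0),(c,d),(e,f)\}\subseteq\mathcal{B}$ is unavoidable.
   Context: The bicyclic inverse semigroup is $\mathcal{B}=\{(a,b)\in\mathbb{Z}\times\mathbb{Z}\mid a\ge 0,\ a+b\ge 0\}$ with multiplication $(a,b)(c,d)=(\max\{c+d,a\}-d,\ b+d)$. A subset $U\subseteq\mathcal{B}$ is called avoidable if $\mathcal{B}$ can be partitioned into two subsets $A$ and $B$ such that no element of $U$ can be written as a product $xy$ of two distinct elements $x\neq y$ both in $A$, or both in $B$. A set is unavoidable if it is not avoidable. *)

From Stdlib Require Import ZArith.
Open Scope Z_scope.

(* Elements of the bicyclic inverse semigroup B are pairs (a,b) of integers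
   with a >= 0 and a + b >= 0. *)
Definition inB (x : Z * Z) : Prop := 0 <= fst x /\ 0 <= fst x + snd x.

Definition bmul (x y : Z * Z) : Z * Z :=
  let (a, b) := x in let (c, d) := y in (Z.max (c + d) a - d, b + d).

(* A partition of B into two subsets A and B is encoded by a colouring
   col : Z*Z -> bool (A = elements of B coloured true, B = coloured false);
   only its values on B matter. *)
Definition avoidable (U : Z * Z -> Prop) : Prop :=
  exists col : Z * Z -> bool,
    forall x y : Z * Z, inB x -> inB y -> x <> y -> col x = col y ->
      ~ U (bmul x y).

Definition unavoidable (U : Z * Z -> Prop) : Prop := ~ avoidable U.

(* Write d = f + 2k with k > 0 and b = f + k. In a colouring avoiding U, two distinct
   elements whose product lies in U get different colours. Among the elements
   (k,-k), (0,k), (c+k,b), (c,k), (e,b) and (e+b,-k) these conflicts contain a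
   5-cycle: (k,-k)(0,k) = (0,0), (c+k,b)(0,k) = (c,d), (k,-k)(e,b) = (e,f), and the
   cycle is closed through (c,k) when e <= c+k and through (e+b,-k) otherwise.
   Oddness makes d - f even, and d, f <> 0 keeps the vertices of the cycle distinct. *)

From Stdlib Require Import ZArith Lia.
Open Scope Z_scope.

Definition separates (U : Z * Z -> Prop) (col : Z * Z -> bool) : Prop :=
  forall x y : Z * Z, inB x -> inB y -> x <> y -> col x = col y -> ~ U (bmul x y).

Lemma separates_colour_neq (U : Z * Z -> Prop) (col : Z * Z -> bool) (x y u : Z * Z) :
  separates U col -> inB x -> inB y -> x <> y -> bmul x y = u -> U u -> col x <> col y.
Proof. intros Hsep Hx Hy Hxy <- Hu Hcol. exact (Hsep x y Hx Hy Hxy Hcol Hu). Qed.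

Lemma bool_no_5cycle (a1 a2 a3 a4 a5 : bool) :
  a1 <> a2 -> a2 <> a3 -> a3 <> a4 -> a4 <> a5 -> a5 <> a1 -> False.
Proof. destruct a1, a2, a3, a4, a5; congruence. Qed.

Ltac conflict Hsep u :=
  apply (separates_colour_neq _ _ _ _ u Hsep);
  [ unfold inB; simpl; lia
  | unfold inB; simpl; lia
  | let E := fresh in intro E; injection E; lia
  | unfold bmul; f_equal; lia
  | assumption ].

Lemma unavoidable_of_triple (U : Z * Z -> Prop) (c d e f k : Z) :
  inB (c, d) -> inB (e, f) -> d = f + 2 * k -> 0 < k -> f <> 0 -> d <> 0 ->
  U (0, 0) -> U (c, d) -> U (e, f) -> unavoidable U.
Proof.
  intros [Hc Hcd] [He Hef] Hdf Hk Hf Hd HU0 HUcd HUef [col Hsep]; cbn [fst snd] in *.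
  set (b := f + k).
  assert (Ea : col (k, -k) <> col (0, k)) by conflict Hsep (0, 0).
  assert (Eb : col (c + k, b) <> col (0, k)) by conflict Hsep (c, d).
  assert (Ec : col (k, -k) <> col (e, b)) by conflict Hsep (e, f).
  destruct (Z_le_gt_dec e (c + k)).
  - assert (Ed : col (c + k, b) <> col (c, k)) by conflict Hsep (c, d).
    assert (Ee : col (e, b) <> col (c, k)) by conflict Hsep (c, d).
    apply (bool_no_5cycle _ _ _ _ _ Ea (not_eq_sym Eb) Ed (not_eq_sym Ee) (not_eq_sym Ec)).
  - assert (Ed : col (e + b, -k) <> col (c + k, b)) by conflict Hsep (e, f).
    assert (Ee : col (e + b, -k) <> col (e, b)) by conflict Hsep (e, f).
    apply (bool_no_5cycle _ _ _ _ _ Ea (not_eq_sym Eb) (not_eq_sym Ed) Ee (not_eq_sym Ec)).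
Qed.

Theorem proposition6p1 (c d e f : Z) :
  inB (c, d) -> inB (e, f) ->
  Z.odd d = true -> Z.odd f = true -> d <> f ->
  unavoidable (fun u => u = (0, 0) \/ u = (c, d) \/ u = (e, f)).
Proof.
  intros Hcd Hef Hd Hf Hne.
  destruct (proj1 (Z.odd_spec d) Hd) as [m Hm].
  destruct (proj1 (Z.odd_spec f) Hf) as [n Hn].
  destruct (Z_lt_ge_dec f d).
  - apply (unavoidable_of_triple _ c d e f (m - n)); auto; lia.
  - apply (unavoidable_of_triple _ e f c d (n - m)); auto; lia.
Qed.
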